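(* Let $V$ be a $3$-dimensional vector space over an algebraically closed field $k$ with $\mathrm{char}\,k\ne 2$, let $\zeta\in GL(V)$, and let $G(\zeta)=\{\varphi\in GL(V)\mid \varphi\zeta\varphi^{-1}\text{ is a scalar multiple of }\zeta\}$. Then $G(\zeta)$ either coincides with the centralizer $C(\zeta)$ of $\zeta$ in $GL(V)$ or contains $C(\zeta)$ as a subgroup of index $3$. In the latter case $\mathrm{char}\,k\ne3$ and $\zeta$ has three distinct characteristic roots $\alpha_1,\alpha_2,\alpha_3$ such that $\alpha_1\alpha_2^{-1}=\alpha_2\alpha_3^{-1}=\alpha_3\alpha_1^{-1}=\epsilon$, where $\epsilon$ is a primitive cube root of $1$. *)

(* V = k^3 represented by 3x3 matrices over k. *)
From mathcomp Require Import all_boot all_order all_algebra.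
Set Implicit Arguments. Unset Strict Implicit. Unset Printing Implicit Defensive.
Import GRing.Theory.
Local Open Scope ring_scope.

Definition Gz (k : fieldType) (z : 'M[k]_3) (phi : 'M[k]_3) : Prop :=
  phi \in unitmx /\ exists c : k, phi *m z *m invmx phi = c *: z.

Definition Cz (k : fieldType) (z : 'M[k]_3) (phi : 'M[k]_3) : Prop :=
  phi \in unitmx /\ phi *m z = z *m phi.

(* H is a subgroup of index n of the group G (subsets of GL_3(k)):
   H is contained in G and G is the disjoint union of n left cosets f i H. *)
Definition index_in (k : fieldType) (n : nat) (H G : 'M[k]_3 -> Prop) : Prop :=
  exists f : 'I_n -> 'M[k]_3,
    (forall i, G (f i)) /\
    (forall i j, i != j -> ~ H (invmx (f i) *m f j)) /\
    (forall phi, G phi -> exists i, H (invmx (f i) *m phi)).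

From mathcomp Require Import all_boot all_order all_algebra.
From Stdlib Require Import Classical_Prop.
Set Implicit Arguments.
Unset Strict Implicit.
Unset Printing Implicit Defensive.
Import GRing.Theory.
Local Open Scope ring_scope.

(** If [phi zeta phi^-1 = c zeta], taking determinants gives [c^3 = 1], and
    [phi |-> c] is a homomorphism from [G(zeta)] to the cube roots of unity
    with kernel [C(zeta)]; so the index is 1 or 3.  In the latter case some
    [phi] has [c] a primitive cube root of unity (hence [char k <> 3]), the
    powers [1, phi, phi^2] represent the cosets, and since [phi] maps an
    eigenvector for [a] to one for [c a], the spectrum of [zeta] is
    [a, c a, c^2 a]. *)

Lemma prime_prim_root (R : idomainType) (p : nat) (c : R) :
  prime p -> c ^+ p = 1 -> c != 1 -> p.-primitive_root c.
Proof.
move=> p_pr cp1 c_neq1.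
have [m m_prim m_dvd_p] := prim_order_exists (prime_gt0 p_pr) cp1.
case/primeP: p_pr => _ /(_ m m_dvd_p) /pred2P [m1 | <- //].
by move: (prim_expr_order m_prim) c_neq1; rewrite m1 expr1 => ->; rewrite eqxx.
Qed.

Lemma eigenvalue_unitmx_neq0 (k : fieldType) (n : nat) (z : 'M[k]_n) (a : k) :
  z \in unitmx -> eigenvalue z a -> a != 0.
Proof.
move=> zU /eigenvalueP [v vz v_neq0]; apply: contra v_neq0 => /eqP a0.
by rewrite -[v]mulmx1 -(mulmxV zU) mulmxA vz a0 scale0r mul0mx.
Qed.

Section Twists.
Variables (k : fieldType) (n : nat) (z : 'M[k]_n.+1).
Hypothesis zU : z \in unitmx.

(* [A z A^-1 = d z], stated without inverting [A]. *)
Definition twists (A : 'M[k]_n.+1) (d : k) := A *m z = d *: (z *m A).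

Lemma twists1 A : twists A 1 <-> A *m z = z *m A.
Proof. by rewrite /twists scale1r. Qed.

Lemma twists_eq1 A d : A \in unitmx -> twists A d -> (A *m z = z *m A <-> d = 1).
Proof.
move=> AU Ad; split=> [Az_zA | d1]; last by apply/twists1; rewrite -d1.
have zAU : z *m A \in unitmx by rewrite unitmx_mul zU.
apply/eqP; rewrite -subr_eq0; apply: contraLR zAU => d1_neq0.
suff -> : z *m A = 0 by rewrite unitmxE det0 unitr0.
have : (d - 1) *: (z *m A) = 0 by rewrite scalerBl -Ad Az_zA scale1r subrr.
by move/eqP; rewrite scaler_eq0 (negbTE d1_neq0) => /eqP.
Qed.

Lemma twists_det A d : A \in unitmx -> twists A d -> d ^+ n.+1 = 1.
Proof.
move=> AU; have detzA_neq0 : \det z * \det A != 0 by rewrite mulf_neq0 // -unitfE -unitmxE.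
move=> /(congr1 determinant); rewrite detZ !det_mulmx [\det A * _]mulrC.
by rewrite -{1}[_ * \det A]mul1r => /(mulIf detzA_neq0) /esym.
Qed.

Lemma twists_mul A B d e : twists A d -> twists B e -> twists (A *m B) (d * e).
Proof.
move=> Ad Be; rewrite /twists -mulmxA Be -scalemxAr [A *m (z *m B)]mulmxA Ad.
by rewrite -scalemxAl scalerA mulrC mulmxA.
Qed.

Lemma twists_inv A d : A \in unitmx -> d != 0 -> twists A d -> twists (invmx A) d^-1.
Proof.
move=> AU d_neq0 Ad; rewrite /twists.
have -> : z *m invmx A = d *: (invmx A *m z).
  rewrite -[z *m _]mul1mx -(mulVmx AU) -!mulmxA [A *m _]mulmxA Ad -scalemxAl.
  by rewrite -!scalemxAr !mulmxA -[_ *m A *m _]mulmxA mulmxV // mulmx1.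
by rewrite scalerA mulVf // scale1r.
Qed.

Lemma twists_exp A d i : twists A d -> twists (A ^+ i) (d ^+ i).
Proof.
move=> Ad; elim: i => [|i IHi]; first by rewrite /twists !expr0 scale1r mulmx1 mul1mx.
by rewrite !exprS; apply: twists_mul.
Qed.

Lemma twists_eigenvalue A d a :
  A \in unitmx -> twists A d -> eigenvalue z a -> eigenvalue z (d * a).
Proof.
move=> AU Ad /eigenvalueP [v vz v_neq0]; apply/eigenvalueP; exists (v *m A).
  by rewrite -mulmxA Ad -scalemxAr mulmxA vz -scalemxAl scalerA.
by apply: contra v_neq0 => /eqP vA0; rewrite -[v]mulmx1 -(mulmxV AU) mulmxA vA0 mul0mx.
Qed.

End Twists.

Section Dimension3.
Variables (k : fieldType) (z : 'M[k]_3).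
Hypothesis zU : z \in unitmx.

Lemma Gz_twistsP A : Gz z A <-> A \in unitmx /\ exists d, twists z A d.
Proof.
split=> -[AU [d Ad]]; split=> //; exists d.
  by rewrite /twists -[A *m z]mulmx1 -(mulVmx AU) mulmxA Ad -scalemxAl.
by rewrite Ad -scalemxAl -mulmxA mulmxV // mulmx1.
Qed.

Lemma Cz_Gz A : Cz z A -> Gz z A.
Proof. by move=> [AU Az_zA]; apply/Gz_twistsP; split=> //; exists 1; apply/twists1. Qed.

Lemma Cz_invmx_mulP A B d e :
  A \in unitmx -> B \in unitmx -> d != 0 -> twists z A d -> twists z B e ->
  Cz z (invmx A *m B) <-> e = d.
Proof.
move=> AU BU d_neq0 Ad Be.
have AB_U : invmx A *m B \in unitmx by rewrite unitmx_mul unitmx_inv AU.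
have AB_twist := twists_mul (twists_inv AU d_neq0 Ad) Be.
rewrite /Cz AB_U (twists_eq1 zU AB_U AB_twist).
split=> [[_ /(congr1 ( *%R d))] | ->]; last by rewrite mulVf.
by rewrite mulrA mulfV // mul1r mulr1.
Qed.

Lemma Gz_index3 phi c :
  phi \in unitmx -> twists z phi c -> 3.-primitive_root c -> index_in 3 (Cz z) (Gz z).
Proof.
move=> phiU phi_c c_prim.
have phiXU i : phi ^+ i \in unitmx by rewrite unitrX.
have cX_neq0 i : c ^+ i != 0 by rewrite expf_neq0 // (prim_root_eq0 c_prim).
have Cz_cosetP i B e :
    B \in unitmx -> twists z B e -> Cz z (invmx (phi ^+ i) *m B) <-> e = c ^+ i.
  by move=> BU Be; apply: Cz_invmx_mulP (phiXU i) BU (cX_neq0 i) (twists_exp i phi_c) Be.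
exists (fun i : 'I_3 => phi ^+ i); split; [|split].
- by move=> i; apply/Gz_twistsP; split=> //; exists (c ^+ i); apply: twists_exp.
- move=> i j i_neq_j /(Cz_cosetP i _ _ (phiXU j) (twists_exp j phi_c)) /eqP.
  by rewrite (eq_prim_root_expr c_prim) !modn_small // eq_sym; apply/negP: i_neq_j.
- move=> psi /Gz_twistsP [psiU [e psi_e]].
  have [i e_eq] := prim_rootP c_prim (twists_det zU psiU psi_e).
  by exists i; apply/(Cz_cosetP i _ _ psiU psi_e).
Qed.

End Dimension3.

Lemma char_poly_roots_cyclic3 (k : closedFieldType) (z phi : 'M[k]_3) (c : k) :
  z \in unitmx -> phi \in unitmx -> twists z phi c -> 3.-primitive_root c ->
  exists a1 a2 a3 eps : k,
     [/\ root (char_poly z) a1, root (char_poly z) a2, root (char_poly z) a3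
       & [/\ a1 != a2, a2 != a3 & a1 != a3]] /\
     3.-primitive_root eps /\
     a1 / a2 = eps /\ a2 / a3 = eps /\ a3 / a1 = eps.
Proof.
move=> zU phiU phi_c c_prim.
have [a za] : exists a, eigenvalue z a.
  by setoid_rewrite eigenvalue_root_char; apply/closed_rootP; rewrite size_char_poly.
have a_neq0 := eigenvalue_unitmx_neq0 zU za.
have c_neq0 : c != 0 by rewrite (prim_root_eq0 c_prim).
have zcXa i : eigenvalue z (c ^+ i * a).
  elim: i => [|i IHi]; first by rewrite mul1r.
  by rewrite exprS -mulrA (twists_eigenvalue phiU phi_c).
have cXa_eq i j : (c ^+ i * a == c ^+ j * a) = (i == j %[mod 3]).
  by rewrite (can_eq (mulfK a_neq0)) (eq_prim_root_expr c_prim).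
have cX_div i j : c ^+ i * a / (c ^+ j * a) = c ^+ i / c ^+ j.
  by rewrite -mulf_div divff // mulr1.
have c2V : (c ^+ 2)^-1 = c.
  apply: (mulfI (expf_neq0 2 c_neq0)).
  by rewrite mulfV ?expf_neq0 // -exprSr (prim_expr_order c_prim).
exists (c ^+ 2 * a), (c ^+ 1 * a), (c ^+ 0 * a), c.
rewrite -!eigenvalue_root_char !zcXa !cXa_eq !cX_div.
by rewrite expr2 mulfK // expr0 divr1 expr1 div1r -expr2 c2V.
Qed.

Theorem lemma4p3 (k : closedFieldType) (z : 'M[k]_3) :
  ~~ (2%N \in [pchar k]) -> z \in unitmx ->
  (forall phi, Gz z phi <-> Cz z phi) \/
  ((forall phi, Cz z phi -> Gz z phi) /\ index_in 3 (Cz z) (Gz z) /\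
   ~~ (3%N \in [pchar k]) /\
   exists a1 a2 a3 eps : k,
     [/\ root (char_poly z) a1, root (char_poly z) a2, root (char_poly z) a3
       & [/\ a1 != a2, a2 != a3 & a1 != a3]] /\
     3.-primitive_root eps /\
     a1 / a2 = eps /\ a2 / a3 = eps /\ a3 / a1 = eps).
Proof.
move=> _ zU.
have [[phi [Gphi not_Cphi]] | G_sub_C] := classic (exists phi, Gz z phi /\ ~ Cz z phi).
  have /Gz_twistsP [phiU [c phi_c]] := Gphi.
  have c_neq1 : c != 1.
    by apply/eqP => c1; apply: not_Cphi; split; last apply/(twists_eq1 zU phiU phi_c).
  have c_prim := prime_prim_root (isT : prime 3) (twists_det zU phiU phi_c) c_neq1.
  right; split; first exact: Cz_Gz.
  split; first exact: Gz_index3 phi_c c_prim.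
  split; first by rewrite (prim_root_pcharF c_prim (dvdnn 3)).
  exact: char_poly_roots_cyclic3 phi_c c_prim.
left=> phi; split=> [Gphi | /Cz_Gz //].
by apply: NNPP => not_Cphi; apply: G_sub_C; exists phi.
Qed.
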